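(* For every three-qubit state $\rho_{ABC}$, $$I_{local}+I_{nonlocal}\le 3,$$ where $I_{local}=|\vec a|^2+|\vec b|^2+|\vec c|^2$ and $I_{nonlocal}=\max\{N_{AB}+N_{AC},\,N_{AB}+N_{BC},\,N_{AC}+N_{BC}\}$ with $N_{ij}=\max\{0,S_{ij}-1\}$.
   Context: $\vec a,\vec b,\vec c\in\mathbb R^3$ are the Bloch vectors of the single-qubit marginals of $\rho_{ABC}$: $a_k=\mathrm{Tr}[\rho_A\sigma_k]$, $b_k=\mathrm{Tr}[\rho_B\sigma_k]$, $c_k=\mathrm{Tr}[\rho_C\sigma_k]$ ($\sigma_k$ Pauli matrices). For a two-qubit state $\rho$ let $t_{kl}=\mathrm{Tr}[\rho\,\sigma_k\otimes\sigma_l]$ and $S(\rho)=\sum_{k,l=1}^3t_{kl}^2$; $S_{ij}=S(\rho_{ij})$ for the two-qubit reduced states $\rho_{ij}$ of $\rho_{ABC}$. *)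

From HB Require Import structures.
From mathcomp Require Import all_boot all_order all_algebra.
From mathcomp Require Import complex mxtens.
Set Implicit Arguments. Unset Strict Implicit. Unset Printing Implicit Defensive.
Import Order.TTheory GRing.Theory Num.Theory.
Local Open Scope ring_scope.

Section Qubits.
Variable R : rcfType.
Local Notation C := (R[i]).

(* composite indices: (a,b) |-> 2a+b  (standard Kronecker ordering) *)
Definition idx2 (a b : 'I_2) : 'I_(2 * 2) := mxtens_index (a, b).
Definition idx3 (a b c : 'I_2) : 'I_(2 * 2 * 2) := mxtens_index (idx2 a b, c).
Definition fst2 (i : 'I_(2 * 2)) : 'I_2 := (mxtens_unindex i).1.
Definition snd2 (i : 'I_(2 * 2)) : 'I_2 := (mxtens_unindex i).2.

Definition adj_mx m n (A : 'M[C]_(m, n)) : 'M[C]_(n, m) := (map_mx (@conjc R) A)^T.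

Definition is_density n (rho : 'M[C]_n) : Prop :=
  [/\ adj_mx rho = rho,
      forall v : 'cV[C]_n, 0 <= (adj_mx v *m rho *m v) 0 0
    & \tr rho = 1].

Definition pauli (k : 'I_3) : 'M[C]_2 :=
  \matrix_(i < 2, j < 2)
    if k == 0 :> nat then (if i == j then 0 else 1)
    else if k == 1 :> nat then
      (if i == j then 0 else if i == 0 :> nat then Complex 0 (-1) else Complex 0 1)
    else (if i == j then (if i == 0 :> nat then 1 else -1) else 0).

Definition kron2 (A B : 'M[C]_2) : 'M[C]_(2 * 2) :=
  \matrix_(i, j) (A (fst2 i) (fst2 j) * B (snd2 i) (snd2 j)).

Definition rhoA (rho : 'M[C]_(2 * 2 * 2)) : 'M[C]_2 :=
  \matrix_(a, a') \sum_(b < 2) \sum_(c < 2) rho (idx3 a b c) (idx3 a' b c).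
Definition rhoB (rho : 'M[C]_(2 * 2 * 2)) : 'M[C]_2 :=
  \matrix_(b, b') \sum_(a < 2) \sum_(c < 2) rho (idx3 a b c) (idx3 a b' c).
Definition rhoC (rho : 'M[C]_(2 * 2 * 2)) : 'M[C]_2 :=
  \matrix_(c, c') \sum_(a < 2) \sum_(b < 2) rho (idx3 a b c) (idx3 a b c').

Definition rhoAB (rho : 'M[C]_(2 * 2 * 2)) : 'M[C]_(2 * 2) :=
  \matrix_(i, j) \sum_(c < 2)
     rho (idx3 (fst2 i) (snd2 i) c) (idx3 (fst2 j) (snd2 j) c).
Definition rhoAC (rho : 'M[C]_(2 * 2 * 2)) : 'M[C]_(2 * 2) :=
  \matrix_(i, j) \sum_(b < 2)
     rho (idx3 (fst2 i) b (snd2 i)) (idx3 (fst2 j) b (snd2 j)).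
Definition rhoBC (rho : 'M[C]_(2 * 2 * 2)) : 'M[C]_(2 * 2) :=
  \matrix_(i, j) \sum_(a < 2)
     rho (idx3 a (fst2 i) (snd2 i)) (idx3 a (fst2 j) (snd2 j)).

(* Bloch vector components  a_k = Tr[rho sigma_k]  (real for Hermitian rho) *)
Definition bloch (s : 'M[C]_2) (k : 'I_3) : R := complex.Re (\tr (s *m pauli k)).
Definition bloch_norm2 (s : 'M[C]_2) : R := \sum_(k < 3) bloch s k ^+ 2.

Definition tcorr (s : 'M[C]_(2 * 2)) (k l : 'I_3) : R :=
  complex.Re (\tr (s *m kron2 (pauli k) (pauli l))).
Definition Scorr (s : 'M[C]_(2 * 2)) : R :=
  \sum_(k < 3) \sum_(l < 3) tcorr s k l ^+ 2.

Definition Nij (s : 'M[C]_(2 * 2)) : R := Num.max 0 (Scorr s - 1).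

Definition I_local (rho : 'M[C]_(2 * 2 * 2)) : R :=
  bloch_norm2 (rhoA rho) + bloch_norm2 (rhoB rho) + bloch_norm2 (rhoC rho).

Definition I_nonlocal (rho : 'M[C]_(2 * 2 * 2)) : R :=
  let NAB := Nij (rhoAB rho) in
  let NAC := Nij (rhoAC rho) in
  let NBC := Nij (rhoBC rho) in
  Num.max (NAB + NAC) (Num.max (NAB + NBC) (NAC + NBC)).

End Qubits.

From HB Require Import structures.
From mathcomp Require Import all_boot all_order all_algebra.
From mathcomp Require Import complex mxtens.
From mathcomp Require Import ring lra zify.
Set Implicit Arguments. Unset Strict Implicit. Unset Printing Implicit Defensive.
Import Order.TTheory GRing.Theory Num.Theory.
Local Open Scope ring_scope.

(* Write <M> = Re Tr(rho M).  If M_1, ..., M_m are pairwise anticommuting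
   Hermitian involutions, then A = sum_t <M_t> M_t satisfies
   A^2 = (sum_t <M_t>^2) 1, so positivity of Tr(rho (1 - A)^2) gives
   sum_t <M_t>^2 <= 1.  Every Bloch component and every correlation t_kl of
   a marginal is the expectation of a three-qubit Pauli string, and covering
   suitable sets of strings by anticommuting families yields |a|^2 <= 1,
   |a|^2 + |b|^2 + S_AB <= 3 (six families of five strings covering the
   fifteen two-qubit strings twice; they admit no partition into such
   families) and |a|^2 + S_AB + S_AC <= 3 (three
   families of seven), together with their images under relabelling the
   qubits.  These nine linear inequalities bound every branch of the maxima
   in I_nonlocal. *)

Section AnticommutingSquare.
Variables (K : comPzRingType) (n : nat) (T : eqType).
Variables (M : T -> 'M[K]_n) (r : rel T).
Hypothesis M_involutive : forall t, M t *m M t = 1%:M.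
Hypothesis M_anticomm : forall t u, r t u -> M t *m M u = - (M u *m M t).

Lemma sqr_sum_anticomm (x : T -> K) (s : seq T) : pairwise r s ->
  let A := \sum_(t <- s) x t *: M t in A *m A = (\sum_(t <- s) x t ^+ 2) *: 1%:M.
Proof.
elim: s => [|t s IHs] /=; first by rewrite !big_nil mul0mx scale0r.
case/andP=> r_t pw_s; rewrite !big_cons.
set B := \sum_(u <- s) _.
have cross : (x t *: M t) *m B + B *m (x t *: M t) = 0.
  rewrite /B mulmx_suml mulmx_sumr -big_split big_seq big1 // => u u_s.
  rewrite -!scalemxAl -!scalemxAr M_anticomm ?(allP r_t u u_s) //.
  by rewrite !scalerN !scalerA mulrC; apply: addNr.
rewrite mulmxDl !mulmxDr IHs // [B *m _ + _]addrC addrACA cross addr0.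
by rewrite -scalemxAl -scalemxAr M_involutive scalerA -expr2 scalerDl.
Qed.

End AnticommutingSquare.

Section TensorProduct.
Variable K : comPzRingType.

Lemma tensmxZl m n p q (c : K) (A : 'M[K]_(m, n)) (B : 'M[K]_(p, q)) :
  (c *: A) *t B = c *: (A *t B).
Proof. by apply/matrixP=> i j; rewrite !mxE mulrA. Qed.

Lemma tensmxZr m n p q (c : K) (A : 'M[K]_(m, n)) (B : 'M[K]_(p, q)) :
  A *t (c *: B) = c *: (A *t B).
Proof. by apply/matrixP=> i j; rewrite !mxE mulrCA. Qed.

Lemma tensmx11 m n : (1%:M : 'M[K]_m) *t (1%:M : 'M[K]_n) = 1%:M.
Proof.
apply/matrixP=> i j.
case: (mxtens_indexP i) => i1 i2; case: (mxtens_indexP j) => j1 j2.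
rewrite tensmxE !mxE (can_eq (@mxtens_indexK _ _)) xpair_eqE.
by case: (i1 == j1); case: (i2 == j2); rewrite ?mulr1 ?mulr0 ?mul0r.
Qed.

Lemma sum_tens m n (F : 'I_(m * n) -> K) :
  \sum_(i < m * n) F i = \sum_(a < m) \sum_(b < n) F (mxtens_index (a, b)).
Proof.
rewrite pair_big /= (reindex (@mxtens_index m n)) /=; first by apply: eq_bigr => -[].
by exists (@mxtens_unindex m n) => x _; rewrite ?mxtens_indexK ?mxtens_unindexK.
Qed.

Lemma sum_iota_ord n (F : nat -> K) : \sum_(k <- iota 0 n) F k = \sum_(k < n) F k.
Proof. by rewrite -(big_mkord xpredT F) /index_iota subn0. Qed.

Lemma sum_ord2 (F : 'I_2 -> K) : \sum_(i < 2) F i = F ord0 + F (lift ord0 ord0).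
Proof. by rewrite !big_ord_recl big_ord0 addr0. Qed.

End TensorProduct.

Lemma max0_sub1_add_le (F : realDomainType) (x y m : F) :
  0 <= m -> x <= m + 1 -> y <= m + 1 -> x + y <= m + 2 ->
  Num.max 0 (x - 1) + Num.max 0 (y - 1) <= m.
Proof. by move=> *; rewrite !maxEle; do 2 case: ifP => _; lra. Qed.

Lemma nonlocal_budget (F : realDomainType) (a b c x y z : F) :
  a <= 1 -> b <= 1 -> c <= 1 ->
  a + b + x <= 3 -> a + c + y <= 3 -> b + c + z <= 3 ->
  a + x + y <= 3 -> b + x + z <= 3 -> c + y + z <= 3 ->
  a + b + c + Num.max (Num.max 0 (x - 1) + Num.max 0 (y - 1))
                (Num.max (Num.max 0 (x - 1) + Num.max 0 (z - 1))
                         (Num.max 0 (y - 1) + Num.max 0 (z - 1))) <= 3.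
Proof.
move=> *; rewrite addrC -lerBrDr !ge_max.
by apply/and3P; split; apply: max0_sub1_add_le; lra.
Qed.

Section Qubits.
Variable R : rcfType.
Local Notation C := R[i].
Local Open Scope complex_scope.

Lemma adj_mx1 n : adj_mx (1%:M : 'M[C]_n) = 1%:M.
Proof. by rewrite /adj_mx map_mx1 trmx1. Qed.

Lemma adj_mxB m n (A B : 'M[C]_(m, n)) : adj_mx (A - B) = adj_mx A - adj_mx B.
Proof. by rewrite /adj_mx map_mxB linearB. Qed.

Lemma adj_mxZ m n (c : C) (A : 'M[C]_(m, n)) : adj_mx (c *: A) = conjc c *: adj_mx A.
Proof. by apply/matrixP=> i j; rewrite !mxE rmorphM. Qed.

Lemma adj_mx_sum m n (I : Type) (s : seq I) (F : I -> 'M[C]_(m, n)) :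
  adj_mx (\sum_(i <- s) F i) = \sum_(i <- s) adj_mx (F i).
Proof. by rewrite /adj_mx raddf_sum linear_sum. Qed.

Lemma adj_mx_tens m n p q (A : 'M[C]_(m, n)) (B : 'M[C]_(p, q)) :
  adj_mx (A *t B) = adj_mx A *t adj_mx B.
Proof. by rewrite /adj_mx map_mxT trmx_tens. Qed.

Lemma Re_real_mul (x : R) (z : C) : complex.Re (x%:C * z) = x * complex.Re z.
Proof. by case: z => a b /=; ring. Qed.

Lemma psd_mxtrace_mul_adj_ge0 n (rho B : 'M[C]_n) :
  (forall v : 'cV[C]_n, 0 <= (adj_mx v *m rho *m v) 0 0) ->
  0 <= \tr (rho *m (B *m adj_mx B)).
Proof.
move=> rho_psd; rewrite mulmxA mxtrace_mulC mulmxA.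
suff -> : \tr (adj_mx B *m rho *m B) = \sum_l (adj_mx (col l B) *m rho *m col l B) 0 0.
  by apply: sumr_ge0 => l _; apply: rho_psd.
apply: eq_bigr => l _.
have -> : adj_mx (col l B) = row l (adj_mx B) by apply/matrixP=> i j; rewrite !mxE.
by rewrite -row_mul !mxE; apply: eq_bigr => j _; rewrite !mxE.
Qed.

Definition expect n (rho M : 'M[C]_n) : R := complex.Re (\tr (rho *m M)).

Lemma density_sum_sqr_expect_le1 n (rho : 'M[C]_n) (T : eqType) (M : T -> 'M[C]_n)
    (r : rel T) (s : seq T) :
  is_density rho -> (forall t, M t *m M t = 1%:M) -> (forall t, adj_mx (M t) = M t) ->
  (forall t u, r t u -> M t *m M u = - (M u *m M t)) -> pairwise r s ->
  \sum_(t <- s) expect rho (M t) ^+ 2 <= 1.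
Proof.
move=> [_ rho_psd tr_rho] M_inv M_adj M_anti pw_s.
pose A := \sum_(t <- s) (expect rho (M t))%:C *: M t.
have A_sqr : A *m A = (\sum_(t <- s) expect rho (M t) ^+ 2)%:C *: 1%:M.
  rewrite (sqr_sum_anticomm M_inv M_anti _ pw_s) rmorph_sum.
  by congr (_ *: _); apply: eq_bigr => t _; rewrite rmorphXn.
have A_adj : adj_mx A = A.
  rewrite /A adj_mx_sum; apply: eq_bigr => t _.
  by rewrite adj_mxZ M_adj conjc_real.
have expect_A : complex.Re (\tr (rho *m A)) = \sum_(t <- s) expect rho (M t) ^+ 2.
  rewrite /A mulmx_sumr (raddf_sum (@mxtrace _ n)) raddf_sum /=.
  by apply: eq_bigr => t _; rewrite -scalemxAr mxtraceZ Re_real_mul expr2.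
have := psd_mxtrace_mul_adj_ge0 (1%:M - A) rho_psd.
rewrite adj_mxB adj_mx1 A_adj mulmxBl !mulmxBr !mul1mx A_sqr -scalemxAr !mulmx1.
rewrite lecE => /andP[_]; rewrite !raddfB /= mxtraceZ Re_real_mul expect_A tr_rho /=.
lra.
Qed.

Ltac entrywise :=
  apply/matrixP=> -[[|[|?]] ?] // -[[|[|?]] ?] //;
  rewrite !mxE ?big_ord_recl ?big_ord0 ?mxE /=;
  apply/eqP; rewrite eq_complex /=; apply/andP; split; apply/eqP; ring.

Lemma pauli_sqr (k : 'I_3) : pauli R k *m pauli R k = 1%:M.
Proof. by case: k => [[|[|[|k]]] ?] //; entrywise. Qed.

Lemma pauli_adj (k : 'I_3) : adj_mx (pauli R k) = pauli R k.
Proof. by case: k => [[|[|[|k]]] ?] //; entrywise. Qed.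

Lemma pauli_anticomm (k l : 'I_3) :
  k != l -> pauli R k *m pauli R l = - (pauli R l *m pauli R k).
Proof. by case: k l => [[|[|[|k]]] ?] // [[|[|[|l]]] ?] // _; entrywise. Qed.

(* Indices above 3 also give the identity, so sigma_comm holds for all a, b. *)
Definition sigma (a : nat) : 'M[C]_2 :=
  if (0 < a < 4)%N then pauli R (inord a.-1) else 1%:M.

Definition sigma_anti (a b : nat) : bool := [&& (0 < a < 4)%N, (0 < b < 4)%N & a != b].

Lemma sigma_pauli (k : 'I_3) : sigma k.+1 = pauli R k.
Proof. by rewrite /sigma /= ltnS ltn_ord inord_val. Qed.

Lemma sigma_sqr a : sigma a *m sigma a = 1%:M.
Proof. by rewrite /sigma; case: ifP => _; rewrite ?pauli_sqr ?mulmx1. Qed.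

Lemma sigma_adj a : adj_mx (sigma a) = sigma a.
Proof. by rewrite /sigma; case: ifP => _; rewrite ?pauli_adj ?adj_mx1. Qed.

Lemma sigma_comm a b :
  sigma a *m sigma b = (-1) ^+ sigma_anti a b *: (sigma b *m sigma a).
Proof.
rewrite /sigma_anti /sigma; case: ifP => a_rng; case: ifP => b_rng /=;
  rewrite ?mul1mx ?mulmx1 ?andbF ?scale1r //.
have [<-|ab] := eqVneq a b; first by rewrite scale1r.
rewrite expr1 scaleN1r; apply: pauli_anticomm.
by rewrite -val_eqE /= !inordK; lia.
Qed.

Definition pauli3 (t : nat * nat * nat) : 'M[C]_(2 * 2 * 2) :=
  sigma t.1.1 *t sigma t.1.2 *t sigma t.2.

Definition anticomm3 (t u : nat * nat * nat) : bool :=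
  odd (sigma_anti t.1.1 u.1.1 + sigma_anti t.1.2 u.1.2 + sigma_anti t.2 u.2).

Lemma pauli3_sqr t : pauli3 t *m pauli3 t = 1%:M.
Proof. by rewrite /pauli3 !tensmx_mul !sigma_sqr !tensmx11. Qed.

Lemma pauli3_adj t : adj_mx (pauli3 t) = pauli3 t.
Proof. by rewrite /pauli3 !adj_mx_tens !sigma_adj. Qed.

Lemma pauli3_anticomm t u :
  anticomm3 t u -> pauli3 t *m pauli3 u = - (pauli3 u *m pauli3 t).
Proof.
rewrite /anticomm3 /pauli3 !tensmx_mul.
rewrite (sigma_comm t.1.1) (sigma_comm t.1.2) (sigma_comm t.2).
rewrite !(tensmxZl, tensmxZr) !scalerA -!exprD => odd_sum.
by rewrite -signr_odd -addnA addnC odd_sum scaleN1r.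
Qed.

Lemma mxtrace_mul_tens3 (rho : 'M[C]_(2 * 2 * 2)) (P Q S : 'M[C]_2) :
  \tr (rho *m (P *t Q *t S)) =
  \sum_(a < 2) \sum_(b < 2) \sum_(c < 2) \sum_(a' < 2) \sum_(b' < 2) \sum_(c' < 2)
    rho (idx3 a b c) (idx3 a' b' c') * (P a' a * Q b' b * S c' c).
Proof.
rewrite /mxtrace !sum_tens.
apply: eq_bigr => a _; apply: eq_bigr => b _; apply: eq_bigr => c _.
rewrite mxE !sum_tens.
apply: eq_bigr => a' _; apply: eq_bigr => b' _; apply: eq_bigr => c' _.
by rewrite !tensmxE.
Qed.

Lemma fst2E (a b : 'I_2) : fst2 (mxtens_index (a, b)) = a.
Proof. by rewrite /fst2 mxtens_indexK. Qed.

Lemma snd2E (a b : 'I_2) : snd2 (mxtens_index (a, b)) = b.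
Proof. by rewrite /snd2 mxtens_indexK. Qed.

Ltac expand_qubit_traces :=
  rewrite mxtrace_mul_tens3 /mxtrace !(sum_tens, sum_ord2, mxE) ?fst2E ?snd2E /=; ring.

Definition corr3 (rho : 'M[C]_(2 * 2 * 2)) (t : nat * nat * nat) : R :=
  expect rho (pauli3 t).

Definition strings_A : seq (nat * nat * nat) :=
  [seq (k.+1, 0, 0) | k <- iota 0 3].
Definition strings_B : seq (nat * nat * nat) :=
  [seq (0, k.+1, 0) | k <- iota 0 3].
Definition strings_C : seq (nat * nat * nat) :=
  [seq (0, 0, k.+1) | k <- iota 0 3].
Definition strings_AB : seq (nat * nat * nat) :=
  [seq (k.+1, l.+1, 0) | k <- iota 0 3, l <- iota 0 3].
Definition strings_AC : seq (nat * nat * nat) :=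
  [seq (k.+1, 0, l.+1) | k <- iota 0 3, l <- iota 0 3].
Definition strings_BC : seq (nat * nat * nat) :=
  [seq (0, k.+1, l.+1) | k <- iota 0 3, l <- iota 0 3].

Variable rho : 'M[C]_(2 * 2 * 2).

Lemma mxtrace_rhoA_mul (P : 'M[C]_2) :
  \tr (rhoA rho *m P) = \tr (rho *m (P *t 1%:M *t 1%:M)).
Proof. expand_qubit_traces. Qed.

Lemma mxtrace_rhoB_mul (P : 'M[C]_2) :
  \tr (rhoB rho *m P) = \tr (rho *m (1%:M *t P *t 1%:M)).
Proof. expand_qubit_traces. Qed.

Lemma mxtrace_rhoC_mul (P : 'M[C]_2) :
  \tr (rhoC rho *m P) = \tr (rho *m (1%:M *t 1%:M *t P)).
Proof. expand_qubit_traces. Qed.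

Lemma mxtrace_rhoAB_mul (P Q : 'M[C]_2) :
  \tr (rhoAB rho *m kron2 P Q) = \tr (rho *m (P *t Q *t 1%:M)).
Proof. expand_qubit_traces. Qed.

Lemma mxtrace_rhoAC_mul (P Q : 'M[C]_2) :
  \tr (rhoAC rho *m kron2 P Q) = \tr (rho *m (P *t 1%:M *t Q)).
Proof. expand_qubit_traces. Qed.

Lemma mxtrace_rhoBC_mul (P Q : 'M[C]_2) :
  \tr (rhoBC rho *m kron2 P Q) = \tr (rho *m (1%:M *t P *t Q)).
Proof. expand_qubit_traces. Qed.

Lemma bloch_rhoA k : bloch (rhoA rho) k = corr3 rho (k.+1, 0, 0).
Proof. by rewrite /bloch mxtrace_rhoA_mul /corr3 /expect /pauli3 /= sigma_pauli. Qed.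

Lemma bloch_rhoB k : bloch (rhoB rho) k = corr3 rho (0, k.+1, 0).
Proof. by rewrite /bloch mxtrace_rhoB_mul /corr3 /expect /pauli3 /= sigma_pauli. Qed.

Lemma bloch_rhoC k : bloch (rhoC rho) k = corr3 rho (0, 0, k.+1).
Proof. by rewrite /bloch mxtrace_rhoC_mul /corr3 /expect /pauli3 /= sigma_pauli. Qed.

Lemma tcorr_rhoAB k l : tcorr (rhoAB rho) k l = corr3 rho (k.+1, l.+1, 0).
Proof. by rewrite /tcorr mxtrace_rhoAB_mul /corr3 /expect /pauli3 /= !sigma_pauli. Qed.

Lemma tcorr_rhoAC k l : tcorr (rhoAC rho) k l = corr3 rho (k.+1, 0, l.+1).
Proof. by rewrite /tcorr mxtrace_rhoAC_mul /corr3 /expect /pauli3 /= !sigma_pauli. Qed.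

Lemma tcorr_rhoBC k l : tcorr (rhoBC rho) k l = corr3 rho (0, k.+1, l.+1).
Proof. by rewrite /tcorr mxtrace_rhoBC_mul /corr3 /expect /pauli3 /= !sigma_pauli. Qed.

Lemma bloch_norm2_rhoA :
  bloch_norm2 (rhoA rho) = \sum_(t <- strings_A) corr3 rho t ^+ 2.
Proof.
by rewrite /bloch_norm2 /strings_A big_map sum_iota_ord; apply: eq_bigr => k _; rewrite bloch_rhoA.
Qed.

Lemma bloch_norm2_rhoB :
  bloch_norm2 (rhoB rho) = \sum_(t <- strings_B) corr3 rho t ^+ 2.
Proof.
by rewrite /bloch_norm2 /strings_B big_map sum_iota_ord; apply: eq_bigr => k _; rewrite bloch_rhoB.
Qed.

Lemma bloch_norm2_rhoC :
  bloch_norm2 (rhoC rho) = \sum_(t <- strings_C) corr3 rho t ^+ 2.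
Proof.
by rewrite /bloch_norm2 /strings_C big_map sum_iota_ord; apply: eq_bigr => k _; rewrite bloch_rhoC.
Qed.

Lemma Scorr_rhoAB : Scorr (rhoAB rho) =
  \sum_(t <- strings_AB) corr3 rho t ^+ 2.
Proof.
rewrite /Scorr /strings_AB big_allpairs_dep sum_iota_ord; apply: eq_bigr => k _.
by rewrite sum_iota_ord; apply: eq_bigr => l _; rewrite tcorr_rhoAB.
Qed.

Lemma Scorr_rhoAC : Scorr (rhoAC rho) =
  \sum_(t <- strings_AC) corr3 rho t ^+ 2.
Proof.
rewrite /Scorr /strings_AC big_allpairs_dep sum_iota_ord; apply: eq_bigr => k _.
by rewrite sum_iota_ord; apply: eq_bigr => l _; rewrite tcorr_rhoAC.
Qed.

Lemma Scorr_rhoBC : Scorr (rhoBC rho) =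
  \sum_(t <- strings_BC) corr3 rho t ^+ 2.
Proof.
rewrite /Scorr /strings_BC big_allpairs_dep sum_iota_ord; apply: eq_bigr => k _.
by rewrite sum_iota_ord; apply: eq_bigr => l _; rewrite tcorr_rhoBC.
Qed.

Hypothesis rho_density : is_density rho.

Lemma corr3_sum_sqr_le1 s : pairwise anticomm3 s -> \sum_(t <- s) corr3 rho t ^+ 2 <= 1.
Proof.
exact: (density_sum_sqr_expect_le1 rho_density pauli3_sqr pauli3_adj pauli3_anticomm).
Qed.

Lemma corr3_sum_sqr_cover (ss : seq (seq (nat * nat * nat))) L k :
  all (pairwise anticomm3) ss -> perm_eq (flatten ss) (flatten (nseq k L)) ->
  k%:R * \sum_(t <- L) corr3 rho t ^+ 2 <= (size ss)%:R.
Proof.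
move=> anti_ss cover.
have -> : k%:R * \sum_(t <- L) corr3 rho t ^+ 2 = \sum_(t <- flatten ss) corr3 rho t ^+ 2.
  by rewrite (perm_big _ cover) big_flatten big_nseq iter_addr_0 mulr_natl.
rewrite big_flatten -sum1_size natr_sum !big_seq; apply: ler_sum => s s_ss.
exact/corr3_sum_sqr_le1/(allP anti_ss).
Qed.

Definition pair_families : seq (seq (nat * nat)) :=
  [:: [:: (0, 1); (0, 2); (1, 3); (2, 3); (3, 3)];
      [:: (0, 1); (0, 3); (1, 2); (2, 2); (3, 2)];
      [:: (0, 2); (0, 3); (1, 1); (2, 1); (3, 1)];
      [:: (1, 0); (2, 0); (3, 1); (3, 2); (3, 3)];
      [:: (1, 0); (2, 1); (2, 2); (2, 3); (3, 0)];
      [:: (1, 1); (1, 2); (1, 3); (2, 0); (3, 0)]].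

Definition star_families : seq (seq (nat * nat * nat)) :=
  [:: [:: (1, 0, 0); (2, 0, 1); (2, 0, 2); (2, 0, 3); (3, 1, 0); (3, 2, 0); (3, 3, 0)];
      [:: (1, 0, 1); (1, 0, 2); (1, 0, 3); (2, 1, 0); (2, 2, 0); (2, 3, 0); (3, 0, 0)];
      [:: (1, 1, 0); (1, 2, 0); (1, 3, 0); (2, 0, 0); (3, 0, 1); (3, 0, 2); (3, 0, 3)]].

Lemma bloch_norm2_le1 :
  [/\ bloch_norm2 (rhoA rho) <= 1, bloch_norm2 (rhoB rho) <= 1 & bloch_norm2 (rhoC rho) <= 1].
Proof.
by rewrite bloch_norm2_rhoA bloch_norm2_rhoB bloch_norm2_rhoC; split; apply: corr3_sum_sqr_le1.
Qed.

Lemma pair_bounds :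
  [/\ bloch_norm2 (rhoA rho) + bloch_norm2 (rhoB rho) + Scorr (rhoAB rho) <= 3,
      bloch_norm2 (rhoA rho) + bloch_norm2 (rhoC rho) + Scorr (rhoAC rho) <= 3 &
      bloch_norm2 (rhoB rho) + bloch_norm2 (rhoC rho) + Scorr (rhoBC rho) <= 3].
Proof.
rewrite bloch_norm2_rhoA bloch_norm2_rhoB bloch_norm2_rhoC.
rewrite Scorr_rhoAB Scorr_rhoAC Scorr_rhoBC; split.
- have := corr3_sum_sqr_cover (k := 2) (L := strings_A ++ strings_B ++ strings_AB)
    (ss := [seq [seq (p.1, p.2, 0) | p <- F] | F <- pair_families]) isT isT.
  rewrite ?size_map !big_cat /=; lra.
- have := corr3_sum_sqr_cover (k := 2) (L := strings_A ++ strings_C ++ strings_AC)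
    (ss := [seq [seq (p.1, 0, p.2) | p <- F] | F <- pair_families]) isT isT.
  rewrite ?size_map !big_cat /=; lra.
- have := corr3_sum_sqr_cover (k := 2) (L := strings_B ++ strings_C ++ strings_BC)
    (ss := [seq [seq (0, p.1, p.2) | p <- F] | F <- pair_families]) isT isT.
  rewrite ?size_map !big_cat /=; lra.
Qed.

Lemma star_bounds :
  [/\ bloch_norm2 (rhoA rho) + Scorr (rhoAB rho) + Scorr (rhoAC rho) <= 3,
      bloch_norm2 (rhoB rho) + Scorr (rhoAB rho) + Scorr (rhoBC rho) <= 3 &
      bloch_norm2 (rhoC rho) + Scorr (rhoAC rho) + Scorr (rhoBC rho) <= 3].
Proof.
rewrite bloch_norm2_rhoA bloch_norm2_rhoB bloch_norm2_rhoC.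
rewrite Scorr_rhoAB Scorr_rhoAC Scorr_rhoBC; split.
- have := corr3_sum_sqr_cover (k := 1) (L := strings_A ++ strings_AB ++ strings_AC)
    (ss := star_families) isT isT.
  rewrite ?size_map !big_cat /=; lra.
- have := corr3_sum_sqr_cover (k := 1) (L := strings_B ++ strings_AB ++ strings_BC)
    (ss := [seq [seq (t.1.2, t.1.1, t.2) | t <- F] | F <- star_families]) isT isT.
  rewrite ?size_map !big_cat /=; lra.
- have := corr3_sum_sqr_cover (k := 1) (L := strings_C ++ strings_AC ++ strings_BC)
    (ss := [seq [seq (t.1.2, t.2, t.1.1) | t <- F] | F <- star_families]) isT isT.
  rewrite ?size_map !big_cat /=; lra.
Qed.

End Qubits.

Theorem theorem7 (R : rcfType) (rho : 'M[R[i]]_(2 * 2 * 2)) :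
  is_density rho -> I_local rho + I_nonlocal rho <= 3.
Proof.
move=> rho_density.
have [a_le1 b_le1 c_le1] := bloch_norm2_le1 rho_density.
have [AB_le3 AC_le3 BC_le3] := pair_bounds rho_density.
have [A_le3 B_le3 C_le3] := star_bounds rho_density.
exact: (nonlocal_budget a_le1 b_le1 c_le1 AB_le3 AC_le3 BC_le3 A_le3 B_le3 C_le3).
Qed.
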